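(* Let $\mu>0$ and $\rho>0$, and let $x\in\mathbb{R}^n$ satisfy $c_i(x)>0$ for all $i=1,\dots,m$. Then $s\mapsto F(x,s;\mu,\rho)$ attains its maximum over $\mathbb{R}^m$ uniquely at $s_i=\mu/c_i(x)$, $i=1,\dots,m$, and $$\max_{s\in\mathbb{R}^m}F(x,s;\mu,\rho)=f(x)-\mu\sum_{i=1}^m\ln c_i(x).$$ Consequently, restricted to points with $c(x)>0$, the minimax problem $\min_x\max_s F(x,s;\mu,\rho)$ reduces to the logarithmic-barrier problem $\min_x f(x)-\mu\sum_{i=1}^m\ln c_i(x)$.
   Context: Let $f:\mathbb{R}^n\to\mathbb{R}$ and $c=(c_1,\dots,c_m):\mathbb{R}^n\to\mathbb{R}^m$ be twice continuously differentiable. For parameters $\mu>0$, $\rho>0$ and variables $x\in\mathbb{R}^n$, $s\in\mathbb{R}^m$, define for $i=1,\dots,m$: $z_i(x,s;\mu,\rho)=\frac{1}{2\rho}\big(\sqrt{(s_i-\rho c_i(x))^2+4\rho\mu}-(s_i-\rho c_i(x))\big)$, $y_i(x,s;\mu,\rho)=\frac{1}{2\rho}\big(\sqrt{(s_i-\rho c_i(x))^2+4\rho\mu}+(s_i-\rho c_i(x))\big)$, $h_i(x,s;\mu,\rho)=-\mu\ln z_i(x,s;\mu,\rho)+\frac{\rho}{2}y_i(x,s;\mu,\rho)^2-\frac{1}{2\rho}s_i^2$, and the augmented Lagrangian $F(x,s;\mu,\rho)=f(x)+\sum_{i=1}^m h_i(x,s;\mu,\rho)$. *)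

From mathcomp Require Import all_boot all_order all_algebra.
From mathcomp Require Import all_classical all_reals all_analysis.
Set Implicit Arguments. Unset Strict Implicit. Unset Printing Implicit Defensive.
Import Order.TTheory GRing.Theory Num.Theory.
Local Open Scope ring_scope.

Section AugLag.
Variables (R : realType) (n m : nat).
Variables (f : 'rV[R]_n -> R) (c : 'rV[R]_n -> 'I_m -> R).

Definition zi (mu rho : R) (x : 'rV[R]_n) (s : 'I_m -> R) (i : 'I_m) : R :=
  (Num.sqrt ((s i - rho * c x i) ^+ 2 + 4 * rho * mu) - (s i - rho * c x i)) / (2 * rho).

Definition yi (mu rho : R) (x : 'rV[R]_n) (s : 'I_m -> R) (i : 'I_m) : R :=
  (Num.sqrt ((s i - rho * c x i) ^+ 2 + 4 * rho * mu) + (s i - rho * c x i)) / (2 * rho).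

Definition hi (mu rho : R) (x : 'rV[R]_n) (s : 'I_m -> R) (i : 'I_m) : R :=
  - mu * ln (zi mu rho x s i) + rho / 2 * (yi mu rho x s i) ^+ 2 - (s i) ^+ 2 / (2 * rho).

Definition augF (mu rho : R) (x : 'rV[R]_n) (s : 'I_m -> R) : R :=
  f x + \sum_(i < m) hi mu rho x s i.

End AugLag.

From mathcomp Require Import all_boot all_order all_algebra all_classical all_reals all_analysis.
From mathcomp Require Import ring lra.
Import Order.TTheory GRing.Theory Num.Theory.
Local Open Scope ring_scope.

(* The augmented Lagrangian F(x,.;mu,rho) is f x plus a sum of terms h_i that
   each depend on the single coordinate s_i, so the maximisation over s splits
   into m independent scalar problems.  For one coordinate, with c = c_i(x) > 0,
   we parametrise s by z = z_i(s) > 0: the identity y z = mu/rho gives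
     s = rho c + mu/z - rho z     and     h(s) = g(z),
   where g z = -mu ln z - c mu / z + mu - rho (z - c)^2 / 2.  Writing
   ln c = ln z + ln (c/z) and using ln t <= t - 1 shows g z <= -mu ln c with
   equality only at z = c, i.e. (the map z |-> mu/z - rho z being injective)
   only at s = mu/c.  The theorem follows by summing the coordinatewise bound
   and noting that a sum of termwise inequalities is an equality only if every
   term is. *)

Lemma ler_sum_eq (R : numDomainType) (I : finType) (a b : I -> R) :
  (forall i, a i <= b i) -> \sum_i b i <= \sum_i a i -> forall i, a i = b i.
Proof.
move=> le_ab le_sum i.
have nonneg j : true -> 0 <= b j - a j by move=> _; rewrite subr_ge0.
have sum0 : \sum_j (b j - a j) = 0.
  by apply/eqP; rewrite sumrB subr_eq0 eq_le le_sum ler_sum.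
by apply/esym/eqP; rewrite -subr_eq0; apply/eqP/(psumr_eq0P nonneg sum0).
Qed.

Section OneCoordinate.
Variables (R : realType) (mu rho c : R).
Hypotheses (mu_gt0 : 0 < mu) (rho_gt0 : 0 < rho) (c_gt0 : 0 < c).

Definition disc (s : R) : R := Num.sqrt ((s - rho * c) ^+ 2 + 4 * rho * mu).
Definition zc (s : R) : R := (disc s - (s - rho * c)) / (2 * rho).
Definition yc (s : R) : R := (disc s + (s - rho * c)) / (2 * rho).
Definition hc (s : R) : R :=
  - mu * ln (zc s) + rho / 2 * yc s ^+ 2 - s ^+ 2 / (2 * rho).

Definition gc (z : R) : R := - mu * ln z - c * mu / z + mu - rho * (z - c) ^+ 2 / 2.

Lemma disc_sqr (s : R) : disc s ^+ 2 = (s - rho * c) ^+ 2 + 4 * rho * mu.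
Proof. by rewrite sqr_sqrtr // addr_ge0 ?sqr_ge0 // !mulr_ge0 // ltW. Qed.

Lemma zc_gt0 (s : R) : 0 < zc s.
Proof.
have disc_gt : s - rho * c < disc s.
  have sqr_lt : (s - rho * c) ^+ 2 < disc s ^+ 2.
    by rewrite disc_sqr ltrDl !mulr_gt0.
  have disc_ge0 : 0 <= disc s by exact: sqrtr_ge0.
  move: sqr_lt disc_ge0; set t := s - rho * c; set d := disc s; nra.
by rewrite divr_gt0 ?subr_gt0 // mulr_gt0.
Qed.

(* The two roots of the quadratic defining z and y multiply to mu / rho. *)
Lemma yc_zc (s : R) : yc s = mu / (rho * zc s).
Proof.
have diff_sqr : (disc s + (s - rho * c)) * (disc s - (s - rho * c)) = 4 * rho * mu.
  by rewrite mulrC -subr_sqr disc_sqr; ring.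
apply: (mulIf (lt0r_neq0 (zc_gt0 s))).
rewrite [LHS]mulf_div diff_sqr; field.
by rewrite (gt_eqF (zc_gt0 s)) (gt_eqF rho_gt0).
Qed.

Lemma s_of_zc (s : R) : s = rho * c + mu / zc s - rho * zc s.
Proof.
have s_yz : s = rho * c + rho * (yc s - zc s) by rewrite /yc /zc; field; rewrite gt_eqF.
by rewrite {1}s_yz yc_zc; field; rewrite (gt_eqF (zc_gt0 s)) (gt_eqF rho_gt0).
Qed.

Lemma hc_gc (s : R) : hc s = gc (zc s).
Proof.
have := s_of_zc s; have := zc_gt0 s; rewrite /hc /gc yc_zc.
set z := zc s => z_gt0 s_z; rewrite [X in X ^+ 2 / _]s_z; field.
by rewrite (gt_eqF z_gt0) (gt_eqF rho_gt0).
Qed.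

Lemma barrier_map_inj {z1 z2 : R} : 0 < z1 -> 0 < z2 ->
  mu / z1 - rho * z1 = mu / z2 - rho * z2 -> z1 = z2.
Proof.
move=> z1_gt0 z2_gt0 same.
have factor : (z1 - z2) * (mu / (z1 * z2) + rho) = (mu / z2 - rho * z2) - (mu / z1 - rho * z1).
  by field; rewrite (gt_eqF z1_gt0) (gt_eqF z2_gt0).
move: factor; rewrite same subrr => /eqP; rewrite mulf_eq0 => /orP[].
  by rewrite subr_eq0 => /eqP.
by rewrite gt_eqF // addr_gt0 // divr_gt0 // mulr_gt0.
Qed.

Lemma gc_le {z : R} : 0 < z -> gc z <= - mu * ln c /\ (gc z = - mu * ln c -> z = c).
Proof.
move=> z_gt0.
have ratio_gt0 : 0 < c / z by rewrite divr_gt0.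
have ln_split : ln c = ln z + ln (c / z).
  by rewrite -lnM ?posrE // mulrC divfK ?gt_eqF.
have ln_le : ln (c / z) <= c / z - 1.
  by have := @le_ln1Dx R (c / z - 1); rewrite addrCA subrr addr0; apply; lra.
have gap : gc z + mu * ln c = mu * (ln (c / z) - (c / z - 1)) - rho * (z - c) ^+ 2 / 2.
  by rewrite /gc ln_split; field; rewrite gt_eqF.
have log_part : mu * (ln (c / z) - (c / z - 1)) <= 0.
  by rewrite mulr_ge0_le0 ?subr_le0 // ltW.
have quad_part : 0 <= rho * (z - c) ^+ 2 / 2.
  by rewrite divr_ge0 // mulr_ge0 ?sqr_ge0 // ltW.
split; first lra.
move=> g_eq.
have : rho * (z - c) ^+ 2 = 0 by lra.
by move/eqP; rewrite mulf_eq0 (gt_eqF rho_gt0) sqrf_eq0 subr_eq0 => /eqP.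
Qed.

Lemma hc_max (s : R) : hc s <= - mu * ln c /\ (hc s = - mu * ln c <-> s = mu / c).
Proof.
have [g_le g_eq] := gc_le (zc_gt0 s).
rewrite hc_gc; split=> //; split.
  by move/g_eq => zc_c; rewrite [s]s_of_zc zc_c; field; rewrite gt_eqF.
move=> s_star.
have zc_c : zc s = c.
  apply: (barrier_map_inj (zc_gt0 s) c_gt0).
  have := s_of_zc s; rewrite s_star; lra.
by rewrite zc_c /gc subrr expr0n /= mulr0 mul0r subr0; field; rewrite gt_eqF.
Qed.

End OneCoordinate.

Theorem theorem3p2 (R : realType) (n m : nat)
  (f : 'rV[R]_n -> R) (c : 'rV[R]_n -> 'I_m -> R)
  (mu rho : R) (x : 'rV[R]_n) :
  0 < mu -> 0 < rho -> (forall i : 'I_m, 0 < c x i) ->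
  let sstar := fun i : 'I_m => mu / c x i in
  (* s* is a maximizer of s |-> F(x,s;mu,rho) over R^m *)
  (forall s : 'I_m -> R, augF f c mu rho x s <= augF f c mu rho x sstar) /\
  (* and it is the unique maximizer *)
  (forall s : 'I_m -> R, augF f c mu rho x sstar <= augF f c mu rho x s ->
     forall i : 'I_m, s i = sstar i) /\
  (* the maximal value is the log-barrier function *)
  augF f c mu rho x sstar = f x - mu * \sum_(i < m) ln (c x i).
Proof.
move=> mu_gt0 rho_gt0 c_gt0 sstar.
have hi_hc s i : hi c mu rho x s i = hc R mu rho (c x i) (s i) by [].
have coord (s : 'I_m -> R) (i : 'I_m) :=
  @hc_max R mu rho (c x i) mu_gt0 rho_gt0 (c_gt0 i) (s i).
have at_star i : hi c mu rho x sstar i = - mu * ln (c x i).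
  by rewrite hi_hc; apply/(coord sstar i).2.
have le_star s i : hi c mu rho x s i <= hi c mu rho x sstar i.
  by rewrite at_star hi_hc; case: (coord s i).
have is_max s : augF f c mu rho x s <= augF f c mu rho x sstar.
  by rewrite /augF lerD2l ler_sum // => i _; exact: le_star.
split=> //; split.
  move=> s ge_star i; apply/(coord s i).2; rewrite -hi_hc -at_star.
  by apply: ler_sum_eq (le_star s) _ i; rewrite -(lerD2l (f x)).
by rewrite /augF (eq_bigr _ (fun i _ => at_star i)) -mulr_sumr mulNr.
Qed.
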